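(* Let $K$ be a $b$-complete idempotent semifield and $V$ an idempotent $b$-space over $K$. (i) Every $a$-linear functional defined on a $b$-subspace $W$ of $V$ extends to an $a$-linear functional on $V$. (ii) If $x,y\in V$ and $x\neq y$, then there is an $a$-linear functional $f$ on $V$ with $f(x)\neq f(y)$.
   Context: An idempotent semigroup is a set with a commutative, associative, idempotent operation $\oplus$, ordered by $x\preceq y$ iff $x\oplus y=y$; $\oplus X$, $\wedge X$ are least upper/greatest lower bounds. $b$-complete: every bounded above subset (including $\emptyset$) has a least upper bound; $a$-complete: every subset has least upper and greatest lower bounds; $\mathbf 0=\oplus\emptyset$. The normal completion $\widehat S$ is the completion by cuts. A homomorphism $f$ of $b$-complete semigroups is a $b$-homomorphism if $f(\oplus X)=\oplus f(X)$ for all bounded above $X$, an $a$-homomorphism if it is a $b$-homomorphism extending to a homomorphism of normal completions that preserves least upper bounds of all subsets. An idempotent semiring has commutative idempotent associative $\oplus$, associative $\odot$ distributing on both sides, unit $\mathbf 1$, zero $\mathbf 0$; it is $b$-complete if $b$-complete as a semigroup with $k\odot(\oplus X)=\oplus(k\odot X)$, $(\oplus X)\odot k=\oplus(X\odot k)$ for bounded $X$; a semifield if nonzero elements are invertible. An idempotent semimodule over $K$ is an idempotent semigroup with an associative, bi-distributive action of $K$ with $\mathbf 1\odot x=x$, $\mathbf 0\odot x=\mathbf 0$; it is $b$-complete if $b$-complete as a semigroup and $(\oplus Q)\odot x=\oplus(Q\odot x)$, $k\odot(\oplus X)=\oplus(k\odot X)$ for bounded $Q\subset K$, $X\subset V$;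 $a$-complete if moreover it has a greatest element $\infty$. For $b$-complete semifield $K$, an idempotent $b$-space is a $b$-complete semimodule with $(\wedge Q)\odot x=\wedge(Q\odot x)$ for all nonempty $Q\subset K$ and $x\neq\infty$. A map $p$ is linear if it preserves $\oplus$ and scalar multiplication; $b$-linear if it is moreover a $b$-homomorphism; $a$-linear if it moreover extends to an $a$-homomorphism of normal completions. A linear functional on $V$ is a linear map $V\to\widehat K$. A $b$-subspace of $V$ is a subsemigroup $W\subset V$ closed under multiplication by elements of $K$ such that the embedding $W\to V$ extends to a $b$-linear mapping. *)

Set Implicit Arguments.
Unset Strict Implicit.

Section Order.
Variables (T : Type) (le : T -> T -> Prop).

Definition ub (X : T -> Prop) (u : T) := forall x, X x -> le x u.
Definition lb (X : T -> Prop) (u : T) := forall x, X x -> le u x.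
Definition is_lub (X : T -> Prop) (s : T) := ub X s /\ forall u, ub X u -> le s u.
Definition is_glb (X : T -> Prop) (s : T) := lb X s /\ forall u, lb X u -> le u s.
Definition bounded_above (X : T -> Prop) := exists u, ub X u.
Definition is_top (x : T) := forall y, le y x.

Definition ubD (D X : T -> Prop) (u : T) := D u /\ ub X u.
Definition is_lubD (D X : T -> Prop) (s : T) :=
  ubD D X s /\ forall u, ubD D X u -> le s u.

(* normal completion (completion by cuts) of the poset (D, le) :
   its elements are the cuts A = (A^u)^l, ordered by inclusion *)
Definition up (D A : T -> Prop) (x : T) := D x /\ forall a, A a -> le a x.
Definition low (D A : T -> Prop) (x : T) := D x /\ forall a, A a -> le x a.
Definition is_cut (D A : T -> Prop) := forall x, A x <-> low D (up D A) x.
Definition cut_sup (D : T -> Prop) (F : (T -> Prop) -> Prop) : T -> Prop :=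
  low D (up D (fun x => exists A, F A /\ A x)).
Definition principal (D : T -> Prop) (x : T) : T -> Prop :=
  fun y => D y /\ le y x.
End Order.

Definition full {T : Type} : T -> Prop := fun _ => True.
Definition image {A B : Type} (f : A -> B) (X : A -> Prop) : B -> Prop :=
  fun y => exists x, X x /\ y = f x.
Definition ceq {T : Type} (A B : T -> Prop) := forall x, A x <-> B x.

Definition sle {T : Type} (add : T -> T -> T) (x y : T) := add x y = y.

Record idem_semiring := IdemSemiring {
  kcar :> Type;
  kadd : kcar -> kcar -> kcar;
  kmul : kcar -> kcar -> kcar;
  k0 : kcar;
  k1 : kcar;
  kaddC : forall x y, kadd x y = kadd y x;
  kaddA : forall x y z, kadd x (kadd y z) = kadd (kadd x y) z;
  kaddI : forall x, kadd x x = x;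
  kadd0 : forall x, kadd k0 x = x;
  kmulA : forall x y z, kmul x (kmul y z) = kmul (kmul x y) z;
  kmul1l : forall x, kmul k1 x = x;
  kmul1r : forall x, kmul x k1 = x;
  kmul0l : forall x, kmul k0 x = k0;
  kmul0r : forall x, kmul x k0 = k0;
  kmulDl : forall x y z, kmul (kadd x y) z = kadd (kmul x z) (kmul y z);
  kmulDr : forall x y z, kmul z (kadd x y) = kadd (kmul z x) (kmul z y)
}.

Definition kle (K : idem_semiring) : K -> K -> Prop := sle (@kadd K).
Arguments kle K : clear implicits.

Definition b_complete_sg {T : Type} (add : T -> T -> T) :=
  forall X : T -> Prop, bounded_above (sle add) X -> exists s, is_lub (sle add) X s.

Definition b_complete_semiring (K : idem_semiring) :=
  b_complete_sg (@kadd K) /\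
  (forall (X : K -> Prop) (s k : K), is_lub (kle K) X s ->
     is_lub (kle K) (image (kmul k) X) (kmul k s)) /\
  (forall (X : K -> Prop) (s k : K), is_lub (kle K) X s ->
     is_lub (kle K) (image (fun x => kmul x k) X) (kmul s k)).

Definition semifield (K : idem_semiring) :=
  forall x : K, x <> k0 K -> exists y, kmul x y = k1 K /\ kmul y x = k1 K.

Record semimodule (K : idem_semiring) := Semimodule {
  vcar :> Type;
  vadd : vcar -> vcar -> vcar;
  v0 : vcar;
  smul : K -> vcar -> vcar;
  vaddC : forall x y, vadd x y = vadd y x;
  vaddA : forall x y z, vadd x (vadd y z) = vadd (vadd x y) z;
  vaddI : forall x, vadd x x = x;
  vadd0 : forall x, vadd v0 x = x;
  smulA : forall a b x, smul (kmul a b) x = smul a (smul b x);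
  smulDl : forall a b x, smul (kadd a b) x = vadd (smul a x) (smul b x);
  smulDr : forall a x y, smul a (vadd x y) = vadd (smul a x) (smul a y);
  smul1 : forall x, smul (k1 K) x = x;
  smul0 : forall x, smul (k0 K) x = v0
}.

Definition vle (K : idem_semiring) (V : semimodule K) : V -> V -> Prop :=
  sle (@vadd K V).
Arguments vle {K} V.

Definition b_complete_semimodule (K : idem_semiring) (V : semimodule K) :=
  b_complete_sg (@vadd K V) /\
  (forall (Q : K -> Prop) (q : K) (x : V), is_lub (kle K) Q q ->
     is_lub (vle V) (image (fun k => smul k x) Q) (smul q x)) /\
  (forall (X : V -> Prop) (s : V) (k : K), is_lub (vle V) X s ->
     is_lub (vle V) (image (smul k) X) (smul k s)).

Definition b_space (K : idem_semiring) (V : semimodule K) :=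
  b_complete_semimodule V /\
  forall (Q : K -> Prop) (q : K) (x : V),
    (exists k, Q k) -> is_glb (kle K) Q q -> ~ is_top (vle V) x ->
    is_glb (vle V) (image (fun k => smul k x) Q) (smul q x).

Definition khat_join (K : idem_semiring) (A B : K -> Prop) : K -> Prop :=
  low (kle K) full (up (kle K) full (fun z => A z \/ B z)).
Definition khat_scale (K : idem_semiring) (k : K) (A : K -> Prop) : K -> Prop :=
  low (kle K) full (up (kle K) full (image (kmul k) A)).

Section Functionals.
Variables (K : idem_semiring) (V : semimodule K).

Definition linear_on (D : V -> Prop) (f : V -> K -> Prop) :=
  (forall x, D x -> is_cut (kle K) full (f x)) /\
  (forall x y, D x -> D y -> ceq (f (vadd x y)) (khat_join (f x) (f y))) /\
  (forall (k : K) x, D x -> ceq (f (smul k x)) (khat_scale k (f x))).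

Definition b_linear_on (D : V -> Prop) (f : V -> K -> Prop) :=
  linear_on D f /\
  forall (X : V -> Prop) (s : V), (forall x, X x -> D x) ->
    is_lubD (vle V) D X s ->
    ceq (f s) (cut_sup (kle K) full (image f X)).

(* a-linear: b-linear, and extends (along the canonical embedding) to a map
   of normal completions D^ -> K^ preserving least upper bounds of all
   subsets *)
Definition a_linear_on (D : V -> Prop) (f : V -> K -> Prop) :=
  b_linear_on D f /\
  exists F : (V -> Prop) -> (K -> Prop),
    (forall A, is_cut (vle V) D A -> is_cut (kle K) full (F A)) /\
    (forall x, D x -> ceq (F (principal (vle V) D x)) (f x)) /\
    (forall FA : (V -> Prop) -> Prop,
       (forall A, FA A -> is_cut (vle V) D A) ->
       ceq (F (cut_sup (vle V) D FA)) (cut_sup (kle K) full (image F FA))).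

Definition b_subspace (W : V -> Prop) :=
  (forall x y, W x -> W y -> W (vadd x y)) /\
  (forall (k : K) x, W x -> W (smul k x)) /\
  (forall X : V -> Prop, (forall x, X x -> W x) ->
     (exists u, ubD (vle V) W X u) -> exists s, is_lubD (vle V) W X s) /\
  (forall (X : V -> Prop) (s : V), (forall x, X x -> W x) ->
     is_lubD (vle V) W X s -> is_lub (vle V) X s).
End Functionals.

(* Encode a functional [f : V -> K^] by the relation [P x u := f x <= u].  When every
   [P x] is an upper ray of [K] (empty or [[m, +oo)]), [P] is closed under suprema in
   its first argument and compatible with scalars, [x |-> inf {u | P x u}] is
   a-linear: suprema of vectors become intersections of rays, i.e. suprema of their
   infima in [K^], and the same formula extends it to all cuts of [V].
   For (i) take [P x u] to mean that [x] lies below the supremum of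
   [{w in W | f w <= u}]; that these rays attain their infimum is where the b-space
   axiom [(inf Q) z = inf (Q z)] enters.  For (ii), if [x] is not below [y], take
   [P z u := z <= u y], or [z <= y \/ u = 1] when [1] is the top of [K = {0, 1}]. *)

From Stdlib Require Import Classical FunctionalExtensionality PropExtensionality.
Set Implicit Arguments.
Unset Strict Implicit.

Notation "a <=k b" := (kle _ a b) (at level 70).
Notation "a <=v b" := (vle _ a b) (at level 70).

Lemma ceq_eq (T : Type) (A B : T -> Prop) : ceq A B -> A = B.
Proof.
  intro H. apply functional_extensionality. intro x.
  apply propositional_extensionality. apply H.
Qed.

Section Cuts.
Variables (T : Type) (le : T -> T -> Prop).

Lemma low_full (U : T -> Prop) x : low le full U x <-> lb le U x.
Proof. split; [intros [_ H]; exact H | intro H; split; [exact I | exact H]]. Qed.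

Lemma up_full (U : T -> Prop) x : up le full U x <-> ub le U x.
Proof. split; [intros [_ H]; exact H | intro H; split; [exact I | exact H]]. Qed.

Lemma low_ext (D X Y : T -> Prop) :
  (forall x, X x <-> Y x) -> ceq (low le D X) (low le D Y).
Proof.
  intros HXY x. split; intros [Dx Hx]; split; try exact Dx;
    intros a Ha; apply Hx, HXY, Ha.
Qed.

Lemma low_up_ext (D X Y : T -> Prop) :
  (forall x, X x <-> Y x) -> ceq (low le D (up le D X)) (low le D (up le D Y)).
Proof.
  intro HXY. apply low_ext. intro b.
  split; intros [Db Hb]; split; try exact Db; intros a Ha; apply Hb, HXY, Ha.
Qed.

Lemma low_up_is_cut (D X : T -> Prop) : is_cut le D (low le D (up le D X)).
Proof.
  intro x. split.
  - intros [Dx Hx]. split; [exact Dx|]. intros b [_ Hb]. apply Hb. split; assumption.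
  - intros [Dx Hx]. split; [exact Dx|]. intros b [Db Hb]. apply Hx. split; [exact Db|].
    intros a [_ Ha]. apply Ha. split; assumption.
Qed.

Lemma low_full_is_cut (U : T -> Prop) : is_cut le full (low le full U).
Proof.
  intro x. rewrite !low_full. split.
  - intros Hx b Hb. rewrite up_full in Hb. apply Hb. rewrite low_full. exact Hx.
  - intros Hx a Ha. apply Hx. rewrite up_full. intros c Hc. rewrite low_full in Hc. apply Hc, Ha.
Qed.

Lemma is_lubD_full (X : T -> Prop) s : is_lubD le full X s -> is_lub le X s.
Proof.
  intros [[_ Hub] Hlub]. split; [exact Hub|]. intros u Hu. apply Hlub. split; [exact I | exact Hu].
Qed.

Hypotheses (le_refl : forall x, le x x) (le_trans : forall x y z, le x y -> le y z -> le x z).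

Lemma principal_is_cut (D : T -> Prop) x : D x -> is_cut le D (principal le D x).
Proof.
  intros Dx y. split.
  - intros [Dy Hy]. split; [exact Dy|]. intros b [_ Hb].
    apply (le_trans Hy). apply Hb. split; [exact Dx | apply le_refl].
  - intros [Dy Hy]. split; [exact Dy|]. apply Hy. split; [exact Dx|]. intros a [_ Ha]; exact Ha.
Qed.
End Cuts.

Lemma sup_preserving_monotone (T U : Type) (leT : T -> T -> Prop) (leU : U -> U -> Prop)
  (D : T -> Prop) (F : (T -> Prop) -> U -> Prop) :
  (forall FA : (T -> Prop) -> Prop, (forall A, FA A -> is_cut leT D A) ->
     ceq (F (cut_sup leT D FA)) (cut_sup leU full (image F FA))) ->
  forall A B, is_cut leT D A -> is_cut leT D B -> (forall x, A x -> B x) ->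
  forall c, F A c -> F B c.
Proof.
  intros HF A B HA HB HAB c Hc.
  set (FA := fun C => C = A \/ C = B).
  assert (HFA : forall C, FA C -> is_cut leT D C) by (intros C [-> | ->]; assumption).
  assert (E : cut_sup leT D FA = B).
  { apply ceq_eq. intro x. split.
    - intros [Dx Hx]. apply HB. split; [exact Dx|]. intros b [Db Hb]. apply Hx.
      split; [exact Db|]. intros a [C [[-> | ->] Ca]]; apply Hb; auto.
    - intro Bx. destruct (proj1 (HB x) Bx) as [Dx _]. split; [exact Dx|].
      intros b [_ Hb]. apply Hb. exists B. split; [right; reflexivity | exact Bx]. }
  rewrite <- E. apply (HF FA HFA). split; [exact I|]. intros b [_ Hb]. apply Hb.
  exists (F A). split; [exists A; split; [left; reflexivity | reflexivity] | exact Hc].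
Qed.

Section Semilattice.
Variables (T : Type) (add : T -> T -> T).
Hypotheses (addC : forall x y, add x y = add y x)
  (addA : forall x y z, add x (add y z) = add (add x y) z)
  (addI : forall x, add x x = x).

Lemma sle_refl x : sle add x x.
Proof. apply addI. Qed.

Lemma sle_trans x y z : sle add x y -> sle add y z -> sle add x z.
Proof. unfold sle. intros Hxy Hyz. rewrite <- Hyz, addA, Hxy. reflexivity. Qed.

Lemma sle_antisym x y : sle add x y -> sle add y x -> x = y.
Proof. unfold sle. intros Hxy Hyx. rewrite <- Hxy, addC. symmetry. exact Hyx. Qed.

Lemma is_lub_add x y : is_lub (sle add) (fun z => z = x \/ z = y) (add x y).
Proof.
  unfold sle. split.
  - intros z [-> | ->].
    + rewrite addA, addI. reflexivity.
    + rewrite (addC x y), addA, addI. reflexivity.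
  - intros z Hz. rewrite <- addA, (Hz y (or_intror eq_refl)). exact (Hz x (or_introl eq_refl)).
Qed.
End Semilattice.

Section SemiringOrder.
Context {K : idem_semiring}.

Lemma kle_refl (a : K) : a <=k a.
Proof. exact (sle_refl (@kaddI K) a). Qed.

Lemma kle_trans (a b c : K) : a <=k b -> b <=k c -> a <=k c.
Proof. apply (sle_trans (@kaddA K)). Qed.

Lemma kle_antisym (a b : K) : a <=k b -> b <=k a -> a = b.
Proof. apply (sle_antisym (@kaddC K)). Qed.

Lemma kle0 (a : K) : k0 K <=k a.
Proof. apply kadd0. Qed.

Lemma kmul_monol (k a b : K) : a <=k b -> kmul k a <=k kmul k b.
Proof. unfold kle, sle. intro H. rewrite <- kmulDr, H. reflexivity. Qed.

Lemma kmul_monor (k a b : K) : a <=k b -> kmul a k <=k kmul b k.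
Proof. unfold kle, sle. intro H. rewrite <- kmulDl, H. reflexivity. Qed.

Lemma is_glb_mulr (Q : K -> Prop) m a a' :
  kmul a a' = k1 K -> kmul a' a = k1 K -> is_glb (kle K) Q m ->
  is_glb (kle K) (image (fun u => kmul u a') Q) (kmul m a').
Proof.
  intros Ha1 Ha2 [Hlb Hgreat]. split.
  - intros q [u [Hu ->]]. apply kmul_monor, Hlb, Hu.
  - intros c Hc. rewrite <- (kmul1r c), <- Ha1, kmulA. apply kmul_monor, Hgreat.
    intros u Hu. rewrite <- (kmul1r u), <- Ha2, kmulA. apply kmul_monor, Hc.
    exists u. split; [exact Hu | reflexivity].
Qed.
End SemiringOrder.

Section SemimoduleOrder.
Context {K : idem_semiring} {V : semimodule K}.

Lemma vle_refl (x : V) : x <=v x.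
Proof. exact (sle_refl (@vaddI K V) x). Qed.

Lemma vle_trans (x y z : V) : x <=v y -> y <=v z -> x <=v z.
Proof. apply (sle_trans (@vaddA K V)). Qed.

Lemma vle_antisym (x y : V) : x <=v y -> y <=v x -> x = y.
Proof. apply (sle_antisym (@vaddC K V)). Qed.

Lemma vle0 (x : V) : v0 V <=v x.
Proof. apply vadd0. Qed.

Lemma is_lub_vadd (x y : V) : is_lub (vle V) (fun z => z = x \/ z = y) (vadd x y).
Proof. exact (is_lub_add (@vaddC K V) (@vaddA K V) (@vaddI K V) x y). Qed.

Lemma smul_monor k (x y : V) : x <=v y -> smul k x <=v smul k y.
Proof. unfold vle, sle. intro H. rewrite <- smulDr, H. reflexivity. Qed.

Lemma smul_monol (x : V) (a b : K) : a <=k b -> smul a x <=v smul b x.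
Proof. unfold vle, kle, sle. intro H. rewrite <- smulDl, H. reflexivity. Qed.
End SemimoduleOrder.

Definition cut_inf {K : idem_semiring} (Q : K -> Prop) : K -> Prop := low (kle K) full Q.

Definition upper_ray {K : idem_semiring} (Q : K -> Prop) :=
  (forall u v, Q u -> u <=k v -> Q v) /\
  ((exists u, Q u) -> exists m, Q m /\ lb (kle K) Q m).

Section Rays.
Context {K : idem_semiring}.

Lemma cut_inf_ext (Q Q' : K -> Prop) : (forall u, Q u <-> Q' u) -> ceq (cut_inf Q) (cut_inf Q').
Proof. apply low_ext. Qed.

Lemma cut_inf_is_cut (Q : K -> Prop) : is_cut (kle K) full (cut_inf Q).
Proof. apply low_full_is_cut. Qed.

Lemma upper_ray_ub_cut_inf (Q : K -> Prop) b :
  upper_ray Q -> ub (kle K) (cut_inf Q) b -> Q b \/ is_top (kle K) b.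
Proof.
  intros [Hup Hmin] Hb. destruct (classic (exists u, Q u)) as [Hne|Hempty].
  - left. destruct (Hmin Hne) as [m [Hm Hmlb]]. apply (Hup m b Hm), Hb. split; [exact I | exact Hmlb].
  - right. intro c. apply Hb. split; [exact I|]. intros a Ha. exfalso. apply Hempty. exists a. exact Ha.
Qed.

Lemma cut_sup_cut_inf (I : Type) (S : I -> Prop) (Q : I -> K -> Prop) :
  (forall i, S i -> upper_ray (Q i)) ->
  ceq (cut_sup (kle K) full (image (fun i => cut_inf (Q i)) S))
      (cut_inf (fun u => forall i, S i -> Q i u)).
Proof.
  intros HQ c. unfold cut_sup, cut_inf. rewrite !low_full. split.
  - intros Hc u Hu. apply Hc. rewrite up_full. intros a [A [[i [Si ->]] [_ Ha]]].
    apply Ha, Hu, Si.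
  - intros Hc b Hb. rewrite up_full in Hb.
    destruct (classic (is_top (kle K) b)) as [Ht|Hnt]; [apply Ht|].
    apply Hc. intros i Si.
    destruct (upper_ray_ub_cut_inf (b := b) (HQ i Si)) as [Hq|Ht]; [|exact Hq|contradiction].
    intros a Ha. apply Hb. exists (cut_inf (Q i)). split; [exists i; split; [exact Si | reflexivity] | exact Ha].
Qed.

Hypothesis HKb : b_complete_sg (@kadd K).

Lemma glb_exists (Q : K -> Prop) : (exists u, Q u) -> exists m, is_glb (kle K) Q m.
Proof.
  intros [u Hu]. destruct (HKb (X := lb (kle K) Q)) as [m [Hmub Hmlub]].
  { exists u. intros c Hc. apply Hc, Hu. }
  exists m. split.
  - intros q Hq. apply Hmlub. intros c Hc. apply Hc, Hq.
  - intros c Hc. apply Hmub, Hc.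
Qed.

Lemma upper_ray_intro (Q : K -> Prop) :
  (forall u v, Q u -> u <=k v -> Q v) ->
  (forall m, (exists u, Q u) -> is_glb (kle K) Q m -> Q m) -> upper_ray Q.
Proof.
  intros Hup Hglb. split; [exact Hup|]. intros Hne.
  destruct (glb_exists Hne) as [m Hm]. exists m. split; [exact (Hglb m Hne Hm) | exact (proj1 Hm)].
Qed.

Lemma upper_ray_bigcap (I : Type) (S : I -> Prop) (Q : I -> K -> Prop) :
  (forall i, S i -> upper_ray (Q i)) -> upper_ray (fun u => forall i, S i -> Q i u).
Proof.
  intros HQ. apply upper_ray_intro.
  - intros u v Hu Huv i Si. exact (proj1 (HQ i Si) u v (Hu i Si) Huv).
  - intros m [u Hu] [_ Hgreat] i Si. destruct (HQ i Si) as [Hup Hmin].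
    destruct Hmin as [mi [Hmi Hmilb]]; [exists u; apply Hu, Si|].
    apply (Hup mi m Hmi). apply Hgreat. intros v Hv. apply Hmilb, Hv, Si.
Qed.

Lemma image_kmul_cut_inf (Q : K -> Prop) k k' :
  kmul k k' = k1 K -> kmul k' k = k1 K ->
  ceq (image (kmul k) (cut_inf Q)) (cut_inf (fun u => Q (kmul k' u))).
Proof.
  intros H1 H2 a. unfold cut_inf. rewrite low_full. split.
  - intros [a0 [Ha0 ->]] u Hu. rewrite low_full in Ha0.
    rewrite <- (kmul1l u), <- H1, <- kmulA. apply kmul_monol, Ha0, Hu.
  - intros Ha. exists (kmul k' a). split.
    + rewrite low_full. intros u Hu. rewrite <- (kmul1l u), <- H2, <- kmulA.
      apply kmul_monol, Ha. rewrite kmulA, H2, kmul1l. exact Hu.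
    + rewrite kmulA, H1, kmul1l. reflexivity.
Qed.
End Rays.

Section FunctionalOfRays.
Context {K : idem_semiring} {V : semimodule K}.
Hypotheses (HKb : b_complete_sg (@kadd K)) (HKf : semifield K).
Variable P : V -> K -> Prop.
Hypothesis P_sup : forall (S : V -> Prop) x u,
  (forall z, ub (vle V) S z -> x <=v z) -> (forall s, S s -> P s u) -> P x u.
Hypothesis P_ray : forall x, upper_ray (P x).
Hypothesis P_scale : forall k x u, k <> k0 K -> P x u -> P (smul k x) (kmul k u).

Lemma P_antitone x y u : x <=v y -> P y u -> P x u.
Proof.
  intros Hxy Hy. apply (P_sup (S := fun s => s = y)).
  - intros z Hz. apply (vle_trans Hxy), Hz. reflexivity.
  - intros s ->. exact Hy.
Qed.

Lemma P_lub X s u : is_lub (vle V) X s -> (P s u <-> forall x, X x -> P x u).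
Proof.
  intros [Hub Hlub]. split.
  - intros Hs x Xx. exact (P_antitone (Hub x Xx) Hs).
  - apply P_sup. exact Hlub.
Qed.

Lemma P_v0 u : P (v0 V) u.
Proof. apply (P_sup (S := fun _ => False)); [intros; apply vle0 | intros s []]. Qed.

Lemma P_smul_iff k k' x u : k <> k0 K -> kmul k k' = k1 K -> kmul k' k = k1 K ->
  (P (smul k x) u <-> P x (kmul k' u)).
Proof.
  intros Hk H1 H2. split; intro H.
  - assert (Hk' : k' <> k0 K).
    { intro E. apply Hk. rewrite <- (kmul1r k), <- H1, E, !kmul0r. reflexivity. }
    generalize (P_scale Hk' H). rewrite <- smulA, H2, smul1. trivial.
  - generalize (P_scale Hk H). rewrite kmulA, H1, kmul1l. trivial.
Qed.

Lemma cut_inf_P_lub X s : is_lub (vle V) X s ->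
  ceq (cut_inf (P s)) (cut_sup (kle K) full (image (fun x => cut_inf (P x)) X)).
Proof.
  intros Hs c. rewrite (cut_inf_ext (fun u => P_lub u Hs) c).
  symmetry. apply cut_sup_cut_inf. intros x _. apply P_ray.
Qed.

Lemma cut_inf_P_vadd x y :
  ceq (cut_inf (P (vadd x y))) (khat_join (cut_inf (P x)) (cut_inf (P y))).
Proof.
  intro c. rewrite (cut_inf_P_lub (is_lub_vadd x y) c). apply low_up_ext. intro a. split.
  - intros [A [[i [[-> | ->] ->]] Ha]]; [left | right]; exact Ha.
  - intros [Ha | Ha]; eexists; (split; [eexists; split; [|reflexivity] | exact Ha]); auto.
Qed.

Lemma cut_inf_P_smul k x : ceq (cut_inf (P (smul k x))) (khat_scale k (cut_inf (P x))).
Proof.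
  destruct (classic (k = k0 K)) as [-> | Hk].
  - rewrite smul0. intro c. unfold khat_scale, cut_inf. rewrite !low_full. split.
    + intros Hc b _. apply Hc, P_v0.
    + intros Hc u _. apply Hc. rewrite up_full. intros a [a0 [_ ->]]. rewrite kmul0l. apply kle0.
  - destruct (HKf Hk) as [k' [H1 H2]]. intro c. unfold khat_scale.
    rewrite (cut_inf_is_cut (P (smul k x)) c). apply low_up_ext. intro a.
    rewrite (image_kmul_cut_inf (P x) H1 H2 a).
    apply cut_inf_ext. intro u. apply P_smul_iff; assumption.
Qed.

Definition cut_inf_on (A : V -> Prop) : K -> Prop := cut_inf (fun u => forall x, A x -> P x u).

Lemma cut_inf_on_principal x : ceq (cut_inf_on (principal (vle V) full x)) (cut_inf (P x)).
Proof.
  apply cut_inf_ext. intro u. split.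
  - intro H. apply H. split; [exact I | apply vle_refl].
  - intros Hx y [_ Hy]. exact (P_antitone Hy Hx).
Qed.

Lemma cut_inf_on_cut_sup (FA : (V -> Prop) -> Prop) :
  ceq (cut_inf_on (cut_sup (vle V) full FA)) (cut_sup (kle K) full (image cut_inf_on FA)).
Proof.
  assert (Hiff : forall u, (forall x, cut_sup (vle V) full FA x -> P x u) <->
                          (forall A, FA A -> forall x, A x -> P x u)).
  { intro u. split.
    - intros H A FAA x Ax. apply H. split; [exact I|]. intros b [_ Hb]. apply Hb. exists A; auto.
    - intros H x [_ Hx]. apply (P_sup (S := fun b => exists A, FA A /\ A b)).
      + intros z Hz. apply Hx. split; [exact I | exact Hz].
      + intros s [A [FAA As]]. exact (H A FAA s As). }
  intro c. unfold cut_inf_on at 1. rewrite (cut_inf_ext Hiff c). symmetry.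
  apply (cut_sup_cut_inf (Q := fun A u => forall x, A x -> P x u)).
  intros A _. apply upper_ray_bigcap; [exact HKb | intros; apply P_ray].
Qed.

Theorem cut_inf_a_linear : a_linear_on full (fun x => cut_inf (P x)).
Proof.
  split; [split; [split; [|split] |] |].
  - intros x _. apply cut_inf_is_cut.
  - intros x y _ _. apply cut_inf_P_vadd.
  - intros k x _. apply cut_inf_P_smul.
  - intros X s _ Hs. apply cut_inf_P_lub, is_lubD_full, Hs.
  - exists cut_inf_on. split; [|split].
    + intros A _. apply cut_inf_is_cut.
    + intros x _. apply cut_inf_on_principal.
    + intros FA _. apply cut_inf_on_cut_sup.
Qed.
End FunctionalOfRays.

Section Extension.
Context {K : idem_semiring} {V : semimodule K}.
Hypotheses (HKb : b_complete_sg (@kadd K)) (HKf : semifield K).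
Hypothesis Hglb : forall (Q : K -> Prop) (q : K) (x : V),
  (exists k, Q k) -> is_glb (kle K) Q q -> ~ is_top (vle V) x ->
  is_glb (vle V) (image (fun k => smul k x) Q) (smul q x).
Variables (W : V -> Prop) (f : V -> K -> Prop).
Hypothesis HW : forall k w, W w -> W (smul k w).
Hypothesis Hf : a_linear_on W f.

Definition sublevel (u : K) (w : V) := W w /\ ub (kle K) (f w) u.

Definition below_sublevel (x : V) (u : K) := forall z, ub (vle V) (sublevel u) z -> x <=v z.

Lemma sublevel_scale k u w : sublevel u w -> sublevel (kmul k u) (smul k w).
Proof.
  intros [Ww Hw]. split; [apply HW, Ww|]. destruct Hf as [[[_ [_ Hscale]] _] _].
  intros c Hc. apply (Hscale k w Ww c) in Hc. destruct Hc as [_ Hc]. apply Hc.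
  rewrite up_full. intros a [a0 [Ha0 ->]]. apply kmul_monol, Hw, Ha0.
Qed.

(* Uses that the extension of [f] to cuts of [W] is monotone and preserves suprema. *)
Lemma sublevel_closed u w : W w ->
  (forall y, W y -> ub (vle V) (sublevel u) y -> w <=v y) -> ub (kle K) (f w) u.
Proof.
  intros Ww Hw c Hc. destruct Hf as [_ [F [_ [HFf HFsup]]]].
  set (FA := fun A => exists r, sublevel u r /\ A = principal (vle V) W r).
  assert (HFA : forall A, FA A -> is_cut (vle V) W A).
  { intros A [r [[Wr _] ->]]. apply principal_is_cut; [apply vle_refl | apply vle_trans | exact Wr]. }
  assert (Hsup : F (cut_sup (vle V) W FA) c).
  { apply (sup_preserving_monotone HFsup (A := principal (vle V) W w)).
    - apply principal_is_cut; [apply vle_refl | apply vle_trans | exact Ww].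
    - apply low_up_is_cut.
    - intros y [Wy Hyw]. split; [exact Wy|]. intros b [Wb Hb].
      apply (vle_trans Hyw), Hw; [exact Wb|]. intros r Rr. apply Hb.
      exists (principal (vle V) W r). split; [exists r; auto | split; [exact (proj1 Rr) | apply vle_refl]].
    - apply (HFf w Ww), Hc. }
  apply (HFsup FA HFA) in Hsup. destruct Hsup as [_ Hsup]. apply Hsup.
  rewrite up_full. intros a [B [[A [[r [Rr ->]] ->]] Ba]].
  apply (HFf r (proj1 Rr)) in Ba. exact (proj2 Rr a Ba).
Qed.

Lemma below_sublevel_sup (S : V -> Prop) x u :
  (forall z, ub (vle V) S z -> x <=v z) -> (forall s, S s -> below_sublevel s u) ->
  below_sublevel x u.
Proof. intros Hx HS z Hz. apply Hx. intros s Ss. exact (HS s Ss z Hz). Qed.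

Lemma below_sublevel_scale k x u :
  k <> k0 K -> below_sublevel x u -> below_sublevel (smul k x) (kmul k u).
Proof.
  intros Hk Hx z Hz. destruct (HKf Hk) as [k' [H1 H2]].
  assert (Hxz : x <=v smul k' z).
  { apply Hx. intros w Rw. rewrite <- (smul1 w), <- H2, smulA.
    apply smul_monor, Hz, sublevel_scale, Rw. }
  apply (smul_monor k) in Hxz. rewrite <- smulA, H1, smul1 in Hxz. exact Hxz.
Qed.

Lemma sublevel_bound_scale a a' b b' z :
  kmul a a' = k1 K -> kmul a' a = k1 K -> kmul b b' = k1 K -> kmul b' b = k1 K ->
  ub (vle V) (sublevel a) z -> ub (vle V) (sublevel b) (smul (kmul b a') z).
Proof.
  intros Ha1 Ha2 Hb1 Hb2 Hz w Rw.
  assert (Rw' : sublevel a (smul (kmul a b') w)).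
  { replace a with (kmul (kmul a b') b) at 1 by (rewrite <- kmulA, Hb2, kmul1r; reflexivity).
    apply sublevel_scale, Rw. }
  apply Hz, (smul_monor (kmul b a')) in Rw'.
  rewrite <- smulA in Rw'.
  replace (kmul (kmul b a') (kmul a b')) with (k1 K) in Rw'
    by (rewrite !kmulA, <- (kmulA b a' a), Ha2, kmul1r, Hb1; reflexivity).
  rewrite smul1 in Rw'. exact Rw'.
Qed.

(* The key use of the b-space axiom: infima of scalars act as infima on the non-top vector [z]. *)
Lemma below_sublevel_below_glb x z a a' q :
  kmul a a' = k1 K -> kmul a' a = k1 K -> ub (vle V) (sublevel a) z -> ~ is_top (vle V) z ->
  ~ below_sublevel x (k0 K) -> (exists u, below_sublevel x u) ->
  is_glb (kle K) (image (fun u => kmul u a') (below_sublevel x)) q -> x <=v smul q z.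
Proof.
  intros Ha1 Ha2 Hz Hnt Hx0 [u0 Hu0] Hq.
  assert (Hne : exists p, image (fun u => kmul u a') (below_sublevel x) p).
  { exists (kmul u0 a'), u0. split; [exact Hu0 | reflexivity]. }
  destruct (Hglb Hne Hq Hnt) as [_ Hgreat]. apply Hgreat.
  intros y [p [[u [Hu ->]] ->]].
  assert (Hu0' : u <> k0 K) by (intro E; subst u; contradiction).
  destruct (HKf Hu0') as [u' [Hu1 Hu2]].
  apply Hu. exact (sublevel_bound_scale Ha1 Ha2 Hu1 Hu2 Hz).
Qed.

Lemma below_sublevel_glb x m : (exists u, below_sublevel x u) ->
  is_glb (kle K) (below_sublevel x) m -> below_sublevel x m.
Proof.
  intros Hne [Hlb Hgreat].
  destruct (classic (below_sublevel x (k0 K))) as [H0|H0].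
  { replace m with (k0 K); [exact H0|]. apply kle_antisym; [apply kle0 | apply Hlb, H0]. }
  destruct (classic (m = k0 K)) as [-> | Hm].
  - intros z Hz.
    destruct (classic (exists u z1, below_sublevel x u /\ ub (vle V) (sublevel u) z1 /\
                                    ~ is_top (vle V) z1)) as [[u [z1 [Hu [Hz1 Hnt]]]] | Hall].
    + assert (Hu0 : u <> k0 K) by (intro E; subst u; contradiction).
      destruct (HKf Hu0) as [u' [E1 E2]].
      apply (vle_trans (y := v0 V)); [|apply vle0].
      rewrite <- (smul0 z1), <- (kmul0l u').
      apply (below_sublevel_below_glb E1 E2 Hz1 Hnt H0 Hne).
      apply (is_glb_mulr E1 E2). split; assumption.
    + (* every bound of every relevant sublevel is the top, which forces [f w <= 0] on [W] *)
      destruct Hne as [u0 Hu0]. apply Hu0. intros w [Ww _]. apply Hz. split; [exact Ww|].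
      intros c Hc. apply Hgreat. intros u Hu. apply (sublevel_closed Ww); [|exact Hc].
      intros y _ Hy. destruct (classic (is_top (vle V) y)) as [Ht|Hnt]; [apply Ht|].
      exfalso. apply Hall. exists u, y. auto.
  - destruct (HKf Hm) as [m' [M1 M2]]. intros z Hz.
    destruct (classic (is_top (vle V) z)) as [Ht|Hnt]; [apply Ht|].
    rewrite <- (smul1 z), <- M1.
    apply (below_sublevel_below_glb M1 M2 Hz Hnt H0 Hne).
    apply (is_glb_mulr M1 M2). split; assumption.
Qed.

Lemma below_sublevel_ray x : upper_ray (below_sublevel x).
Proof.
  apply upper_ray_intro; [exact HKb | | exact (@below_sublevel_glb x)].
  intros u v Hu Huv z Hz. apply Hu. intros w [Ww Hw]. apply Hz. split; [exact Ww|].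
  intros c Hc. exact (kle_trans (Hw c Hc) Huv).
Qed.

Lemma cut_inf_below_sublevel w : W w -> ceq (cut_inf (below_sublevel w)) (f w).
Proof.
  intros Ww c. destruct Hf as [[[Hcut _] _] _]. rewrite (Hcut w Ww c).
  apply low_ext. intro u. rewrite up_full. split.
  - intros Hu. apply (sublevel_closed Ww). intros y _ Hy. apply Hu, Hy.
  - intros Hu z Hz. apply Hz. split; assumption.
Qed.

Theorem a_linear_extension :
  exists g : V -> K -> Prop, a_linear_on full g /\ forall w, W w -> ceq (g w) (f w).
Proof.
  exists (fun x => cut_inf (below_sublevel x)). split.
  - apply cut_inf_a_linear;
      [exact HKb | exact HKf | exact below_sublevel_sup | exact below_sublevel_ray
      | exact below_sublevel_scale].
  - exact cut_inf_below_sublevel.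
Qed.
End Extension.

Section Separation.
Context {K : idem_semiring} {V : semimodule K}.
Hypotheses (HKb : b_complete_sg (@kadd K)) (HKf : semifield K).
Hypothesis Hglb : forall (Q : K -> Prop) (q : K) (x : V),
  (exists k, Q k) -> is_glb (kle K) Q q -> ~ is_top (vle V) x ->
  is_glb (vle V) (image (fun k => smul k x) Q) (smul q x).

Lemma semifield_top_one : is_top (kle K) (k1 K) -> forall c, c <> k0 K -> c = k1 K.
Proof.
  intros Ht c Hc. destruct (HKf Hc) as [c' [E1 _]]. apply kle_antisym; [apply Ht|].
  rewrite <- E1. rewrite <- (kmul1r c) at 2. apply kmul_monol, Ht.
Qed.

(* [f z = inf {u | z <= u y}]; then [f y <= 1] while [f x <= 1] would give [x <= y]. *)
Lemma separating_functional_nontop x y : ~ is_top (kle K) (k1 K) -> ~ x <=v y ->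
  exists f : V -> K -> Prop, a_linear_on full f /\ ~ ceq (f x) (f y).
Proof.
  intros Hnt Hxy. set (P := fun z u => z <=v smul u y).
  assert (Hy : ~ is_top (vle V) y) by (intro Ht; apply Hxy, Ht).
  assert (Hray : forall z, upper_ray (P z)).
  { intro z. apply upper_ray_intro; [exact HKb | |].
    - intros u v Hu Huv. exact (vle_trans Hu (smul_monol y Huv)).
    - intros m Hne Hm. destruct (Hglb Hne Hm Hy) as [_ Hgreat].
      apply Hgreat. intros w [q [Hq ->]]. exact Hq. }
  exists (fun z => cut_inf (P z)). split.
  - apply cut_inf_a_linear; [exact HKb | exact HKf | | exact Hray |].
    + intros S z u Hz HS. exact (Hz _ HS).
    + intros k z u _ Hz. unfold P. rewrite smulA. apply smul_monor, Hz.
  - intro E. destruct (upper_ray_ub_cut_inf (b := k1 K) (Hray x)) as [H|H].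
    + intros a Ha. apply E in Ha. destruct Ha as [_ Ha]. apply Ha.
      unfold P. rewrite smul1. apply vle_refl.
    + apply Hxy. unfold P in H. rewrite smul1 in H. exact H.
    + contradiction.
Qed.

(* Here [K = {0, 1}] and [f z] is [0] below [y] and [1] elsewhere. *)
Lemma separating_functional_top x y : is_top (kle K) (k1 K) -> ~ x <=v y ->
  exists f : V -> K -> Prop, a_linear_on full f /\ ~ ceq (f x) (f y).
Proof.
  intros Ht Hxy. set (P := fun z u => z <=v y \/ u = k1 K).
  exists (fun z => cut_inf (P z)). split.
  - apply cut_inf_a_linear; [exact HKb | exact HKf | | |].
    + intros S z u Hz HS. destruct (classic (u = k1 K)) as [E|E]; [right; exact E|].
      left. apply Hz. intros s Ss. destruct (HS s Ss) as [H|H]; [exact H | contradiction].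
    + intro z. split.
      * intros u v [H | ->] Hv; [left; exact H | right; apply kle_antisym; [apply Ht | exact Hv]].
      * intros _. destruct (classic (z <=v y)) as [H|H].
        -- exists (k0 K). split; [left; exact H | intros u _; apply kle0].
        -- exists (k1 K). split; [right; reflexivity|].
           intros u [H' | ->]; [contradiction | apply kle_refl].
    + intros k z u Hk Hz. rewrite (semifield_top_one Ht Hk), smul1, kmul1l. exact Hz.
  - intro E. assert (H1 : cut_inf (P y) (k1 K)).
    { apply E. split; [exact I|]. intros u [H | ->]; [contradiction | apply kle_refl]. }
    destruct H1 as [_ H1].
    assert (E10 : k1 K = k0 K) by (apply kle_antisym; [apply H1; left; apply vle_refl | apply kle0]).
    apply Hxy. rewrite <- (smul1 x), <- (smul1 y), E10, !smul0. apply vle_refl.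
Qed.

Lemma separating_functional x y : ~ x <=v y ->
  exists f : V -> K -> Prop, a_linear_on full f /\ ~ ceq (f x) (f y).
Proof.
  destruct (classic (is_top (kle K) (k1 K))).
  - apply separating_functional_top; assumption.
  - apply separating_functional_nontop; assumption.
Qed.
End Separation.

Theorem theorem7p3 (K : idem_semiring) (HKb : b_complete_semiring K)
  (HKf : semifield K) (V : semimodule K) (HV : b_space V) :
  (forall (W : V -> Prop) (f : V -> K -> Prop),
     b_subspace W -> a_linear_on W f ->
     exists g : V -> K -> Prop,
       a_linear_on full g /\ forall w, W w -> ceq (g w) (f w)) /\
  (forall x y : V, x <> y ->
     exists f : V -> K -> Prop, a_linear_on full f /\ ~ ceq (f x) (f y)).
Proof.
  destruct HKb as [HKb _]. destruct HV as [_ Hglb]. split.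
  - intros W f [_ [HW _]] Hf. exact (a_linear_extension HKb HKf Hglb HW Hf).
  - intros x y Hxy. destruct (classic (x <=v y)) as [Hle|Hnle].
    + destruct (separating_functional HKb HKf Hglb (x := y) (y := x)) as [f [Hf Hsep]].
      { intro Hyx. apply Hxy, vle_antisym; assumption. }
      exists f. split; [exact Hf|]. intro E. apply Hsep. intro c. symmetry. apply E.
    + exact (separating_functional HKb HKf Hglb Hnle).
Qed.
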